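(* A ring $R$ is CSNC if and only if (1) $2\in\mathrm{Nil}(R)$, and (2) for every clean element $a\in R$ there exists an integer $k\ge 0$ such that $a^{2^k}-a^{2^{k+1}}\in\mathrm{Nil}(R)$.
   Context: All rings are associative with identity $1$. For a ring $R$, $\mathrm{Id}(R)$, $U(R)$, $\mathrm{Nil}(R)$ denote the sets of idempotents, units and nilpotent elements. An element $a\in R$ is clean if $a=e+u$ for some $e\in\mathrm{Id}(R)$, $u\in U(R)$. An element $a$ is strongly nil-clean if $a=e+q$ with $e\in \mathrm{Id}(R)$, $q\in\mathrm{Nil}(R)$ and $eq=qe$. A ring $R$ is called CSNC if every clean element of $R$ is strongly nil-clean. *)

From mathcomp Require Import all_boot all_algebra.
Set Implicit Arguments. Unset Strict Implicit. Unset Printing Implicit Defensive.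
Import GRing.Theory.
Local Open Scope ring_scope.

Definition idem (R : pzRingType) (e : R) : Prop := e * e = e.
Definition unit_el (R : pzRingType) (u : R) : Prop :=
  exists v : R, u * v = 1 /\ v * u = 1.
Definition is_nil (R : pzRingType) (q : R) : Prop := exists n : nat, q ^+ n = 0.
Definition clean (R : pzRingType) (a : R) : Prop :=
  exists e u : R, idem e /\ unit_el u /\ a = e + u.
Definition strongly_nil_clean (R : pzRingType) (a : R) : Prop :=
  exists e q : R, idem e /\ is_nil q /\ e * q = q * e /\ a = e + q.
Definition CSNC (R : pzRingType) : Prop :=
  forall a : R, clean a -> strongly_nil_clean a.

(* Forward: [-1 = 0 + (-1)] is clean, and a strongly nil-clean decomposition of
   [-1] forces its idempotent part to be [1], so [2 = -(-1 - 1)] is nilpotent;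
   moreover [a = e + q] strongly nil-clean gives [a - a^2 = q (1 - 2e - q)].
   Backward: all computations happen in the commutative image of [Z[X]] under
   [X |-> a].  Since [2] is nilpotent, [(X - X^2)^(2^k)] agrees with
   [X^(2^k) - X^(2^(k+1))] up to a multiple of [2], so [a - a^2] is nilpotent,
   and the Newton iteration [x |-> 3x^2 - 2x^3] lifts [a] modulo the nilradical
   to an idempotent polynomial in [a], which commutes with [a]. *)

From HB Require Import structures.
From mathcomp Require Import all_boot all_algebra.
From mathcomp Require Import ring.
Set Implicit Arguments. Unset Strict Implicit. Unset Printing Implicit Defensive.
Import GRing.Theory.
Local Open Scope ring_scope.

Section Nilpotent.
Variable R : pzRingType.

Lemma expr_nil_ge (x : R) m n : x ^+ m = 0 -> (m <= n)%N -> x ^+ n = 0.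
Proof. by move=> xm0 /subnKC <-; rewrite exprD xm0 mul0r. Qed.

Lemma is_nilD_comm (x y : R) :
  GRing.comm x y -> is_nil x -> is_nil y -> is_nil (x + y).
Proof.
move=> cxy [m xm0] [n yn0]; exists (m + n)%N; rewrite exprDn_comm //.
apply: big1 => -[i /= lt_i] _; have [le_ni | lt_in] := leqP n i.
  by rewrite (expr_nil_ge yn0 le_ni) mulr0 mul0rn.
by rewrite (expr_nil_ge xm0) ?mul0r ?mul0rn // -addnBA ?leq_addr // ltnW.
Qed.

Lemma is_nilM_comm (x y : R) : GRing.comm x y -> is_nil x -> is_nil (x * y).
Proof. by move=> cxy [n xn0]; exists n; rewrite exprMn_comm // xn0 mul0r. Qed.

Lemma is_nil_exp (x : R) m : is_nil (x ^+ m) -> is_nil x.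
Proof. by move=> [n xmn0]; exists (m * n)%N; rewrite exprM. Qed.

End Nilpotent.

Section StronglyNilClean.
Variable R : pzRingType.

Lemma strongly_nil_clean_sub_sqr (a : R) :
  strongly_nil_clean a -> is_nil (a - a ^+ 2).
Proof.
move=> [e [q [e_idem [q_nil [ceq ->]]]]].
have -> : e + q - (e + q) ^+ 2 = q * (1 - e - e - q).
  rewrite expr2 !mulrDl !mulrDr e_idem -ceq !mulrN mulr1 -ceq.
  by rewrite !opprD !addrA [e + q]addrC addrK.
apply: is_nilM_comm q_nil.
by rewrite /GRing.comm !mulrBr !mulrBl mulr1 mul1r ceq.
Qed.

Lemma CSNC_nil2 : CSNC R -> is_nil (2 : R).
Proof.
move=> csnc.
have clean_N1 : clean (-1 : R).
  exists 0, (-1); split; first by rewrite /idem mul0r.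
  by split; [exists (-1); rewrite mulrNN mulr1 | rewrite add0r].
have [e [q [e_idem [[n qn0] [_ N1eq]]]]] := csnc _ clean_N1.
have q_def : q = -1 - e by rewrite N1eq addrC addKr.
(* [f = 1 - e] satisfies [f (-q) = f], hence [f = f (-q)^n = 0]. *)
have fNq : (1 - e) * - q = 1 - e.
  by rewrite q_def opprB opprK mulrDr mulr1 mulrBl mul1r e_idem subrr add0r.
have fNqn k : (1 - e) * (- q) ^+ k = 1 - e.
  by elim: k => [|k IHk]; rewrite ?expr0 ?mulr1 // exprSr mulrA IHk fNq.
have e1 : e = 1.
  by apply/esym/eqP; rewrite -subr_eq0 -(fNqn n) exprNn qn0 !mulr0.
have -> : (2 : R) = - q by rewrite q_def e1 opprB opprK mulr2n.
by exists n; rewrite exprNn qn0 mulr0.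
Qed.

End StronglyNilClean.

Section CommutativeIdentities.
Variable T : comPzRingType.

Lemma sub_exp2n_mod2 (x y : T) n :
  exists z, (x - y) ^+ (2 ^ n) = x ^+ (2 ^ n) - y ^+ (2 ^ n) + 2 * z.
Proof.
elim: n => [|n [z IHz]]; first by exists 0; rewrite !expn0 !expr1 mulr0 addr0.
exists (y ^+ (2 ^ n.+1) - x ^+ (2 ^ n) * y ^+ (2 ^ n)
        + 2 * z * (x ^+ (2 ^ n) - y ^+ (2 ^ n) + z)).
by rewrite expnS mulnC !exprM IHz; ring.
Qed.

(* Newton iteration for [x |-> 3x^2 - 2x^3], which squares [x - x^2]. *)
Lemma idempotent_approx (x : T) j : exists e c d,
  e - e ^+ 2 = (x - x ^+ 2) ^+ (2 ^ j) * c /\ x - e = (x - x ^+ 2) * d.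
Proof.
elim: j x => [|j IHj] x.
  by exists x, 1, 0; rewrite expn0 expr1 mulr1 mulr0 subrr.
pose x' := 3 * x ^+ 2 - 2 * x ^+ 3; pose w := 3 + 4 * (x - x ^+ 2).
have x'_sub_sqr : x' - x' ^+ 2 = (x - x ^+ 2) ^+ 2 * w by rewrite /x' /w; ring.
have [e [c [d [ec xd]]]] := IHj x'.
exists e, (w ^+ (2 ^ j) * c), ((1 - 2 * x) + (x - x ^+ 2) * w * d); split.
  by rewrite ec x'_sub_sqr exprMn -exprM -expnS mulrA.
have -> : x - e = (x - x') + (x' - e) by rewrite addrA subrK.
by rewrite xd x'_sub_sqr /x'; ring.
Qed.

End CommutativeIdentities.

Section PolynomialsInAnElement.
Variables (R : nzRingType) (a : R).

Lemma commr_int_rmorph : commr_rmorph (intmul (1 : R)) a.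
Proof. exact: commr_int. Qed.

Local Notation ev := (horner_morph commr_int_rmorph).

Lemma ev_comm (p q : {poly int}) : GRing.comm (ev p) (ev q).
Proof. by rewrite /GRing.comm -!rmorphM mulrC. Qed.

Lemma ev_nil_mul2 (p : {poly int}) : is_nil (2 : R) -> is_nil (ev (2 * p)).
Proof.
move=> nil2; rewrite rmorphM rmorph_nat; apply: is_nilM_comm nil2.
exact/esym/commr_nat.
Qed.

Lemma ev_lift_idempotent (p : {poly int}) : is_nil (ev (p - p ^+ 2)) ->
  exists e : {poly int}, idem (ev e) /\ is_nil (ev (p - e)).
Proof.
move=> [n pn0]; have [e [c [d [ec pd]]]] := idempotent_approx p n.
exists e; split.
  apply/eqP; rewrite -subr_eq0 -opprB oppr_eq0 -expr2 -rmorphXn -rmorphB.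
  rewrite ec rmorphM rmorphXn.
  by rewrite (expr_nil_ge pn0) ?mul0r // ltnW // ltn_expl.
by rewrite pd rmorphM; apply: is_nilM_comm (ev_comm _ _) _; exists n.
Qed.

Lemma strongly_nil_clean_of_nil2 k :
  is_nil (2 : R) -> is_nil (a ^+ (2 ^ k) - a ^+ (2 ^ k.+1)) ->
  strongly_nil_clean a.
Proof.
move=> nil2 nil_ak.
have [z Xz] := sub_exp2n_mod2 ('X : {poly int}) ('X ^+ 2) k.
have nil_sub_sqr : is_nil (ev ('X - 'X ^+ 2)).
  apply: (@is_nil_exp _ _ (2 ^ k)); rewrite -rmorphXn Xz -exprM -expnS.
  rewrite rmorphD; apply: is_nilD_comm (ev_comm _ _) _ (ev_nil_mul2 _ nil2).
  by rewrite rmorphB !rmorphXn /= horner_morphX.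
have [e [e_idem nil_ae]] := ev_lift_idempotent nil_sub_sqr.
rewrite rmorphB /= horner_morphX in nil_ae.
have comm_ea : GRing.comm (ev e) a.
  by have := ev_comm e 'X; rewrite /= horner_morphX.
exists (ev e), (a - ev e); split=> //; split=> //; split.
  exact: commrB comm_ea (commr_refl _).
by rewrite addrC subrK.
Qed.

End PolynomialsInAnElement.

(* [horner_morph] needs a nonzero codomain, so a nonzero [pzRingType] is
   repackaged as an [nzRingType]; the zero ring is treated directly. *)
Section NontrivialRing.
Variables (R : pzRingType) (R_nontrivial : (1 : R) != 0).

Definition nontrivial_ring of (1 : R) != 0 : Type := R.
Local Notation nzR := (nontrivial_ring R_nontrivial).
HB.instance Definition _ := GRing.PzRing.on nzR.
HB.instance Definition _ := GRing.PzSemiRing_isNonZero.Build nzR R_nontrivial.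

End NontrivialRing.

Lemma strongly_nil_clean_trivial (R : pzRingType) (a : R) :
  (1 : R) = 0 -> strongly_nil_clean a.
Proof.
move=> R10; have a0 : a = 0 by rewrite -[a]mulr1 R10 mulr0.
exists 0, 0; rewrite /idem mul0r a0 addr0.
by do !split=> //; exists 1%N; rewrite expr1.
Qed.

Theorem corollary2p11 (R : pzRingType) :
  CSNC R <->
  (is_nil (2 : R) /\
   forall a : R, clean a ->
     exists k : nat, is_nil (a ^+ (2 ^ k)%N - a ^+ (2 ^ k.+1)%N)).
Proof.
split=> [csnc | [nil2 nil_exp] a /nil_exp [k nil_ak]].
  split=> [|a /csnc snc_a]; first exact: CSNC_nil2.
  by exists 0%N; rewrite expn0 expn1 expr1; apply: strongly_nil_clean_sub_sqr.
have [R10 | R_nontrivial] := eqVneq (1 : R) 0.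
  exact: strongly_nil_clean_trivial R10.
exact (@strongly_nil_clean_of_nil2 (nontrivial_ring R_nontrivial) a k
  nil2 nil_ak).
Qed.
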